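(* Let $F,G$ be complete posheaves on a locale $X$ and $\alpha:F\to G$ an order-preserving morphism. The following are equivalent: (1) $\alpha$ is sup-preserving, i.e. $sup_G\circ\alpha_*=\alpha\circ sup_F$ as morphisms $\mathbb{P}F\to G$. (2) For each $u\in\mathcal{O}(X)$, $\alpha_u:F(u)\to G(u)$ preserves arbitrary joins, and for all $v\le u$ in $\mathcal{O}(X)$ we have $\alpha_u\circ f_{v,u}=g_{v,u}\circ\alpha_v$, where $f_{v,u}:F(v)\to F(u)$ and $g_{v,u}:G(v)\to G(u)$ are the left adjoints of the restriction maps $F(u)\to F(v)$ and $G(u)\to G(v)$. (3) $\alpha$ has a right adjoint, i.e. there is an order-preserving $\beta:G\to F$ with $\alpha\dashv\beta$.
   Context: Let $X$ be a locale with frame of opens $\mathcal{O}(X)$. A posheaf on $X$ is a sheaf of sets $F$ with (POS1) each $F(u)$ a poset; (POS2) restriction maps $F(u)\to F(v)$, $x\mapsto x|_v$ ($v\le u$), order-preserving; (POS3) if $u=\bigvee_i u_i$ and $s,t\in F(u)$ satisfy $s|_{u_i}\le t|_{u_i}$ for all $i$, then $s\le t$. Points of $F$ are elements $x\in F(u)$ (for varying $u$), ordered by $x\le y$ ($x\in F(u)$, $y\in F(w)$) iff $u\le w$ and $x\le y|_u$. A morphism of posheaves is order-preserving if it preserves this order; $\alpha\dashv\beta$ means $\alpha x\le y\iff x\le\beta y$ for all points. A posheaf $F$ is complete iff every $F(u)$ is a complete lattice and every restriction map $F(u)\to F(v)$ ($v\le u$) is surjective and has both a left and a right adjoint (equivalently,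 the principal ideal embedding into the sheaf of downsheaves has a left adjoint). $\mathbb{P}F$ is the sheaf with $\mathbb{P}F(u)$ the set of subsheaves of $F^u$ (the restriction of $F$ to $\downarrow u$), ordered by inclusion, with restriction $S\mapsto S^v$. For complete $F$, $sup_F:\mathbb{P}F\to F$ sends $S\in\mathbb{P}F(u)$ to the least $z\in F(u)$ such that $S(v)\subseteq\{y\in F(v)\mid y\le z|_v\}$ for all $v\le u$ (this is the left adjoint of the principal ideal embedding $F\to\mathbb{P}F$). For $\alpha:F\to G$, $\alpha_*:\mathbb{P}F\to\mathbb{P}G$ sends $S\in\mathbb{P}F(u)$ to the subsheaf of $G^u$ generated by the presheaf $v\mapsto\alpha_v(S(v))$. *)

(** A locale X is given by its frame of opens O(X). *)
Record Frame := {
  fcar :> Type;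
  fle : fcar -> fcar -> Prop;
  fle_refl : forall a, fle a a;
  fle_trans : forall a b c, fle a b -> fle b c -> fle a c;
  fle_antisym : forall a b, fle a b -> fle b a -> a = b;
  fsup : (fcar -> Prop) -> fcar;
  fsup_ub : forall (P : fcar -> Prop) a, P a -> fle a (fsup P);
  fsup_least : forall (P : fcar -> Prop) b,
      (forall a, P a -> fle a b) -> fle (fsup P) b;
  fmeet : fcar -> fcar -> fcar;
  fmeet_l : forall a b, fle (fmeet a b) a;
  fmeet_r : forall a b, fle (fmeet a b) b;
  fmeet_glb : forall a b c, fle c a -> fle c b -> fle c (fmeet a b);
  fdistr : forall a (P : fcar -> Prop),
      fmeet a (fsup P) = fsup (fun w => exists p, P p /\ w = fmeet a p)
}.
Arguments fle {f} _ _.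
Arguments fsup {f} _.
Arguments fmeet {f} _ _.

Definition covers {X : Frame} (u : X) {I : Type} (ui : I -> X) : Prop :=
  u = fsup (fun w => exists i, w = ui i).

Record posheaf (X : Frame) := {
  sec :> X -> Type;
  res : forall u v : X, fle v u -> sec u -> sec v;
  res_id : forall u (h : fle u u) x, res u u h x = x;
  res_comp : forall u v w (h1 : fle v u) (h2 : fle w v) (h3 : fle w u) x,
      res v w h2 (res u v h1 x) = res u w h3 x;
  glue : forall (u : X) (I : Type) (ui : I -> X), covers u ui ->
      forall s : forall i, sec (ui i),
      (forall i j (w : X) (h1 : fle w (ui i)) (h2 : fle w (ui j)),
          res (ui i) w h1 (s i) = res (ui j) w h2 (s j)) ->
      exists t : sec u,
        (forall i (h : fle (ui i) u), res u (ui i) h t = s i) /\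
        (forall t' : sec u,
            (forall i (h : fle (ui i) u), res u (ui i) h t' = s i) -> t' = t);
  ple : forall u, sec u -> sec u -> Prop;
  ple_refl : forall u x, ple u x x;
  ple_trans : forall u x y z, ple u x y -> ple u y z -> ple u x z;
  ple_antisym : forall u x y, ple u x y -> ple u y x -> x = y;
  res_mono : forall u v (h : fle v u) x y,
      ple u x y -> ple v (res u v h x) (res u v h y);
  pos3 : forall (u : X) (I : Type) (ui : I -> X), covers u ui ->
      forall x y, (forall i (h : fle (ui i) u),
                     ple (ui i) (res u (ui i) h x) (res u (ui i) h y)) ->
      ple u x y
}.
Arguments res {X} p {u v} _ _ : rename.
Arguments ple {X} p {u} _ _ : rename.

Record morphism {X : Frame} (F G : posheaf X) := {
  mor :> forall u, F u -> G u;
  mor_nat : forall u v (h : fle v u) x, mor v (res F h x) = res G h (mor u x)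
}.

Definition point {X : Frame} (F : posheaf X) := {u : X & F u}.

Definition pt_le {X : Frame} {F : posheaf X} (p q : point F) : Prop :=
  exists h : fle (projT1 p) (projT1 q),
    ple F (projT2 p) (res F h (projT2 q)).

Definition mor_pt {X : Frame} {F G : posheaf X} (a : morphism F G)
  (p : point F) : point G := existT _ (projT1 p) (a _ (projT2 p)).

Definition order_preserving {X : Frame} {F G : posheaf X} (a : morphism F G) :=
  forall p q, pt_le p q -> pt_le (mor_pt a p) (mor_pt a q).

Definition adjoint {X : Frame} {F G : posheaf X}
  (a : morphism F G) (b : morphism G F) :=
  forall (p : point F) (q : point G),
    pt_le (mor_pt a p) q <-> pt_le p (mor_pt b q).

Definition is_lub {X : Frame} (F : posheaf X) (u : X) (P : F u -> Prop)
  (z : F u) : Prop :=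
  (forall x, P x -> ple F x z) /\
  (forall z', (forall x, P x -> ple F x z') -> ple F z z').

Definition is_left_adj {X : Frame} (F : posheaf X) (u v : X)
  (r : F u -> F v) (l : F v -> F u) : Prop :=
  forall x y, ple F (l x) y <-> ple F x (r y).

Definition is_right_adj {X : Frame} (F : posheaf X) (u v : X)
  (r : F u -> F v) (rr : F v -> F u) : Prop :=
  forall x y, ple F (r x) y <-> ple F x (rr y).

Definition complete {X : Frame} (F : posheaf X) : Prop :=
  (forall (u : X) (P : F u -> Prop), exists z, is_lub F u P z) /\
  (forall (u v : X) (h : fle v u),
     (forall y : F v, exists x : F u, res F h x = y) /\
     (exists l, is_left_adj F u v (res F h) l) /\
     (exists rr, is_right_adj F u v (res F h) rr)).

(** S is a subsheaf of F^u (an element of PF(u)); S v is a subset of F(v),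
    empty unless v <= u. *)
Definition is_subsheaf {X : Frame} (F : posheaf X) (u : X)
  (S : forall v : X, F v -> Prop) : Prop :=
  (forall v x, S v x -> fle v u) /\
  (forall v w (h : fle w v) x, S v x -> S w (res F h x)) /\
  (forall (v : X) (I : Type) (vi : I -> X), covers v vi ->
     forall x : F v, (forall i (h : fle (vi i) v), S (vi i) (res F h x)) ->
     S v x).

Definition sup_ub {X : Frame} (F : posheaf X) (u : X)
  (S : forall v : X, F v -> Prop) (z : F u) : Prop :=
  forall (v : X) (h : fle v u) (y : F v), S v y -> ple F y (res F h z).

Definition is_supP {X : Frame} (F : posheaf X) (u : X)
  (S : forall v : X, F v -> Prop) (z : F u) : Prop :=
  sup_ub F u S z /\ (forall z', sup_ub F u S z' -> ple F z z').

(** alpha_*(S): the subsheaf of G^u generated by v |-> alpha_v(S(v)). *)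
Definition alpha_star {X : Frame} {F G : posheaf X} (a : morphism F G)
  (u : X) (S : forall v : X, F v -> Prop) : forall v : X, G v -> Prop :=
  fun v y => forall T, is_subsheaf G u T ->
     (forall w x, S w x -> T w (a w x)) -> T v y.

(** (1) sup_G o alpha_* = alpha o sup_F *)
Definition sup_preserving {X : Frame} {F G : posheaf X} (a : morphism F G) :=
  forall (u : X) (S : forall v : X, F v -> Prop), is_subsheaf F u S ->
    forall z, is_supP F u S z -> is_supP G u (alpha_star a u S) (a u z).

Definition cond2 {X : Frame} {F G : posheaf X} (a : morphism F G) :=
  (forall (u : X) (P : F u -> Prop) (z : F u), is_lub F u P z ->
      is_lub G u (fun y => exists x, P x /\ y = a u x) (a u z)) /\
  (forall (u v : X) (h : fle v u) (f : F v -> F u) (g : G v -> G u),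
      is_left_adj F u v (res F h) f -> is_left_adj G u v (res G h) g ->
      forall x, a u (f x) = g (a v x)).

Definition has_right_adjoint {X : Frame} {F G : posheaf X} (a : morphism F G) :=
  exists b : morphism G F, order_preserving b /\ adjoint a b.

From Stdlib Require Import Setoid ClassicalEpsilon.

(* All three conditions are compared through upper bounds.  A sup in a
   posheaf is determined by the elements above it, and the upper bounds of the
   subsheaf generated by a family are those of the family, because the
   elements lying under a fixed section form a subsheaf.  Feeding (1) the
   subsheaves generated by a family inside one F(u), or by a single section of
   F(v), gives the two halves of (2).  From (2) one builds the right adjoint
   componentwise, b_u y := sup {x | a_u x <= y}; its naturality is the
   transpose of the commutation of a with the left adjoints of restriction.
   Finally, a right adjoint transposes the upper-bound descriptions of
   sup_F S and sup_G (a_* S) into each other, which gives (1). *)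

Lemma covers_fle {X : Frame} (v : X) {I : Type} (vi : I -> X) :
  covers v vi -> forall i, fle (vi i) v.
Proof. intros -> i. apply fsup_ub. now exists i. Qed.

Section Posheaf.
Context {X : Frame} (H : posheaf X).

Lemma res_irrelevant u v (h1 h2 : fle v u) (x : H u) : res H h1 x = res H h2 x.
Proof.
  rewrite <- (res_comp X H u v v h1 (fle_refl X v) h2 x). now rewrite res_id.
Qed.

Lemma pt_le_existT u v (h : fle v u) (x : H v) (y : H u) :
  pt_le (existT _ v x : point H) (existT _ u y) <-> ple H x (res H h y).
Proof.
  split.
  - intros [h' Hle]. simpl in *. now rewrite (res_irrelevant u v h h').
  - intro Hle. now exists h.
Qed.

Lemma ple_yoneda u (x y : H u) : (forall z, ple H x z <-> ple H y z) -> x = y.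
Proof.
  intro E. apply (ple_antisym X H u); [apply E | apply E]; apply ple_refl.
Qed.

Lemma ple_coyoneda u (x y : H u) : (forall z, ple H z x <-> ple H z y) -> x = y.
Proof.
  intro E. apply (ple_antisym X H u); [apply E | apply E]; apply ple_refl.
Qed.

Lemma is_lub_iff u (P : H u -> Prop) (z : H u) :
  is_lub H u P z <-> forall z', ple H z z' <-> forall x, P x -> ple H x z'.
Proof.
  split.
  - intros [Hub Hleast] z'. split; [|apply Hleast].
    intros Hz x Hx. exact (ple_trans X H u _ _ _ (Hub x Hx) Hz).
  - intro E. split; [apply E, ple_refl | intros z' Hz'; now apply E].
Qed.

Lemma is_supP_iff u (S : forall v, H v -> Prop) (z : H u) :
  is_supP H u S z <-> forall z', ple H z z' <-> sup_ub H u S z'.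
Proof.
  split.
  - intros [Hub Hleast] z'. split; [|apply Hleast].
    intros Hz v h y Hy. eapply ple_trans; [apply Hub, Hy | now apply res_mono].
  - intro E. split; [apply E, ple_refl | intros z' Hz'; now apply E].
Qed.

Definition generated (u : X) (Q : forall w, H w -> Prop) : forall w, H w -> Prop :=
  fun v x => forall T, is_subsheaf H u T -> (forall w y, Q w y -> T w y) -> T v x.

Lemma generated_subsheaf u Q :
  (forall w y, Q w y -> fle w u) -> is_subsheaf H u (generated u Q).
Proof.
  intro hQ. split; [|split].
  - intros v x Hx. apply (Hx (fun w _ => fle w u)); [|exact hQ].
    split; [|split].
    + auto.
    + intros v0 w h _ Hv0. exact (fle_trans X _ _ _ h Hv0).
    + intros v0 I vi Hc x0 Hx0. rewrite Hc. apply fsup_least.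
      intros w [i ->]. exact (Hx0 i (covers_fle v0 vi Hc i)).
  - intros v w h x Hx T HT HQ. apply (proj1 (proj2 HT)). now apply Hx.
  - intros v I vi Hc x Hx T HT HQ. apply (proj2 (proj2 HT) v I vi Hc).
    intros i h. now apply Hx.
Qed.

(* The family P in F(v), seen as a presheaf on X living only over v. *)
Definition concentrated (v : X) (P : H v -> Prop) : forall w, H w -> Prop :=
  fun w x => exists e : w = v, P (eq_rect w H x v e).

Lemma concentrated_fle u v (h : fle v u) P :
  forall w y, concentrated v P w y -> fle w u.
Proof. intros w y [e _]. now subst w. Qed.

End Posheaf.

Definition id_morphism {X : Frame} (H : posheaf X) : morphism H H :=
  {| mor := fun _ x => x; mor_nat := fun _ _ _ _ => eq_refl |}.

Section UpperBounds.
Context {X : Frame} {H K : posheaf X} (m : morphism H K).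

Definition bounded_by (u : X) (Q : forall w, H w -> Prop) (z : K u) : Prop :=
  forall w x (h : fle w u), Q w x -> ple K (m w x) (res K h z).

Definition below (u : X) (z : K u) : forall w, H w -> Prop :=
  fun w x => exists h : fle w u, ple K (m w x) (res K h z).

Lemma below_subsheaf u z : is_subsheaf H u (below u z).
Proof.
  split; [|split].
  - now intros v x [h _].
  - intros v w h x [hv Hx]. exists (fle_trans X _ _ _ h hv).
    rewrite mor_nat, <- (res_comp X K u v w hv h). now apply res_mono.
  - intros v I vi Hc x Hx.
    assert (hv : fle v u).
    { rewrite Hc. apply fsup_least. intros w [i ->].
      now destruct (Hx i (covers_fle v vi Hc i)). }
    exists hv. apply (pos3 X K v I vi Hc). intros i h.
    destruct (Hx i h) as [h' Hle]. rewrite mor_nat in Hle.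
    now rewrite (res_comp X K u v (vi i) hv h h').
Qed.

Lemma bounded_by_generated u Q z :
  (forall w y, Q w y -> fle w u) ->
  bounded_by u (generated H u Q) z <-> bounded_by u Q z.
Proof.
  intro hQ. split.
  - intros Hb w x h Hx. apply Hb. intros T _ HQ. now apply HQ.
  - intros Hb w x h Hx.
    destruct (Hx (below u z) (below_subsheaf u z)) as [h' Hle].
    + intros w' y Hy. exists (hQ _ _ Hy). now apply Hb.
    + now rewrite (res_irrelevant K u w h h').
Qed.

Lemma bounded_by_concentrated u v (h : fle v u) (P : H v -> Prop) z :
  bounded_by u (concentrated H v P) z <->
  forall x, P x -> ple K (m v x) (res K h z).
Proof.
  split.
  - intros Hb x Hx. apply Hb. now exists eq_refl.
  - intros Hb w x h' [e Hx]. subst w.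
    rewrite (res_irrelevant K u v h' h). now apply Hb.
Qed.

End UpperBounds.

Lemma sup_ub_alpha_star {X : Frame} {H K : posheaf X} (m : morphism H K) u S z :
  (forall w x, S w x -> fle w u) ->
  sup_ub K u (alpha_star m u S) z <-> bounded_by m u S z.
Proof.
  intro hS. split.
  - intros Hub w x h Hx. apply Hub. intros T _ HS. now apply HS.
  - intros Hb v h y Hy.
    destruct (Hy _ (below_subsheaf (id_morphism K) u z)) as [h' Hle].
    + intros w x Hx. exists (hS _ _ Hx). now apply Hb.
    + now rewrite (res_irrelevant K u v h h').
Qed.

Lemma sup_ub_bounded_by {X : Frame} (H : posheaf X) u S (z : H u) :
  sup_ub H u S z <-> bounded_by (id_morphism H) u S z.
Proof. split; intros Hb w x h; apply Hb. Qed.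

Section SupPreserving.
Context {X : Frame} {F G : posheaf X} (a : morphism F G)
  (hsup : sup_preserving a).

(* [a] preserves the sup of the subsheaf generated by a family [P] in [F v]. *)
Lemma sup_preserving_concentrated u v (h : fle v u) (P : F v -> Prop) (z : F u) :
  (forall z', ple F z z' <-> forall x, P x -> ple F x (res F h z')) ->
  forall z', ple G (a u z) z' <-> forall x, P x -> ple G (a v x) (res G h z').
Proof.
  intro Hz.
  set (S := generated F u (concentrated F v P)).
  pose proof (concentrated_fle F u v h P) as hQ.
  assert (hS : is_subsheaf F u S) by now apply generated_subsheaf.
  assert (HS : is_supP F u S z).
  { apply is_supP_iff. intro z'.
    rewrite Hz, sup_ub_bounded_by. unfold S.
    rewrite (bounded_by_generated (id_morphism F)) by exact hQ.
    symmetry. exact (bounded_by_concentrated (id_morphism F) u v h P z'). }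
  intro z'.
  rewrite (proj1 (is_supP_iff G u _ _) (hsup u S hS z HS) z').
  rewrite sup_ub_alpha_star by apply hS.
  unfold S. rewrite (bounded_by_generated a) by exact hQ.
  apply bounded_by_concentrated.
Qed.

Lemma sup_preserving_joins u (P : F u -> Prop) z :
  is_lub F u P z -> is_lub G u (fun y => exists x, P x /\ y = a u x) (a u z).
Proof.
  rewrite !is_lub_iff. intros Hz z'.
  rewrite (sup_preserving_concentrated u u (fle_refl X u) P z).
  - rewrite res_id. split.
    + intros Hb y [x [Hx ->]]. now apply Hb.
    + intros Hb x Hx. apply Hb. now exists x.
  - intro z''. rewrite res_id. apply Hz.
Qed.

Lemma sup_preserving_left_adjoints u v (h : fle v u) f g :
  is_left_adj F u v (res F h) f -> is_left_adj G u v (res G h) g ->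
  forall x, a u (f x) = g (a v x).
Proof.
  intros Hf Hg x. apply ple_yoneda. intro z'.
  rewrite (Hg (a v x) z'), (sup_preserving_concentrated u v h (eq x) (f x)).
  - split; [intro Hb; now apply Hb | now intros Hb y <-].
  - intro z''. rewrite (Hf x z''). split; [now intros Hb y <- | intro Hb; now apply Hb].
Qed.

Lemma sup_preserving_cond2 : cond2 a.
Proof.
  split; [exact sup_preserving_joins | exact sup_preserving_left_adjoints].
Qed.

End SupPreserving.

Section RightAdjoint.
Context {X : Frame} {F G : posheaf X}.

Definition local_adjoint (a : forall u, F u -> G u) (b : forall u, G u -> F u) :=
  forall u x y, ple G (a u x) y <-> ple F x (b u y).

Lemma adjoint_iff_local (a : morphism F G) (b : morphism G F) :
  adjoint a b <-> local_adjoint a b.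
Proof.
  split.
  - intros Hab u x y.
    rewrite <- (res_id X G u (fle_refl X u) y) at 1.
    rewrite <- (res_id X F u (fle_refl X u) (b u y)).
    rewrite <- !pt_le_existT. apply (Hab (existT _ u x) (existT _ u y)).
  - intros Hab [v x] [u y]. unfold pt_le; simpl.
    split; intros [h Hle]; exists h; rewrite <- mor_nat in *; now apply Hab.
Qed.

Lemma local_adjoint_order_preserving (a : morphism F G) (b : morphism G F) :
  local_adjoint a b -> order_preserving b.
Proof.
  intros Hab [v y'] [u y] [h Hle]. exists h. simpl in *.
  rewrite <- mor_nat. apply Hab.
  eapply ple_trans; [apply Hab, ple_refl | exact Hle].
Qed.

Lemma order_preserving_ple (a : morphism F G) (ha : order_preserving a)
  u (x y : F u) : ple F x y -> ple G (a u x) (a u y).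
Proof.
  intro Hle. rewrite <- (res_id X G u (fle_refl X u) (a u y)).
  apply (pt_le_existT G u u (fle_refl X u)).
  apply (ha (existT _ u x) (existT _ u y)).
  apply (pt_le_existT F u u (fle_refl X u)). now rewrite res_id.
Qed.

Section WithAdjoint.
Variables (a : morphism F G) (b : morphism G F) (hab : local_adjoint a b).

Lemma local_adjoint_res u v (h : fle v u) x y :
  ple G (a v x) (res G h y) <-> ple F x (res F h (b u y)).
Proof. rewrite <- mor_nat. apply hab. Qed.

Lemma right_adjoint_sup_preserving : sup_preserving a.
Proof.
  intros u S hS z Hz. apply is_supP_iff. intro z'.
  rewrite sup_ub_alpha_star by apply hS.
  red in hab. rewrite hab, (proj1 (is_supP_iff F u S z) Hz), sup_ub_bounded_by.
  split; intros Hb w x h Hx; apply local_adjoint_res; now apply Hb.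
Qed.

Lemma right_adjoint_cond2 : cond2 a.
Proof.
  red in hab. split.
  - intros u P z. rewrite !is_lub_iff. intros Hz z'.
    rewrite hab, Hz. split.
    + intros Hb y [x [Hx ->]]. now apply hab, Hb.
    + intros Hb x Hx. apply hab, Hb. now exists x.
  - intros u v h f g Hf Hg x. apply ple_yoneda. intro z'.
    now rewrite hab, (Hf x (b u z')), <- local_adjoint_res, (Hg (a v x) z').
Qed.

End WithAdjoint.

Section FromCond2.
Variables (a : morphism F G) (ha : order_preserving a).

Lemma join_preserving_local_right_adjoint (hF : complete F)
  (hjoin : forall u P z, is_lub F u P z ->
           is_lub G u (fun y => exists x, P x /\ y = a u x) (a u z)) :
  forall u (y : G u), exists bu, forall x, ple G (a u x) y <-> ple F x bu.
Proof.
  intros u y. destruct (proj1 hF u (fun x => ple G (a u x) y)) as [bu Hbu].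
  exists bu. intro x. split.
  - intro Hx. now apply Hbu.
  - intro Hx. eapply ple_trans; [apply (order_preserving_ple a ha), Hx|].
    apply (hjoin u _ bu Hbu). now intros t [x0 [Hx0 ->]].
Qed.

(* Transposing [a_u o f = g o a_v] across the adjunctions [f -| res], [g -| res]
   and [a -| b] yields [b_v o res = res o b_u]. *)
Lemma local_right_adjoint_natural (hF : complete F) (hG : complete G)
  (hleft : forall u v (h : fle v u) f g,
      is_left_adj F u v (res F h) f -> is_left_adj G u v (res G h) g ->
      forall x, a u (f x) = g (a v x))
  (b : forall u, G u -> F u) (hab : local_adjoint a b) :
  forall u v (h : fle v u) y, b v (res G h y) = res F h (b u y).
Proof.
  intros u v h y.
  destruct (proj2 hF u v h) as [_ [[f Hf] _]].
  destruct (proj2 hG u v h) as [_ [[g Hg] _]].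
  red in hab. apply ple_coyoneda. intro x.
  now rewrite <- hab, <- (Hg (a v x) y), <- (hleft u v h f g Hf Hg), hab,
    (Hf x (b u y)).
Qed.

Lemma cond2_right_adjoint (hF : complete F) (hG : complete G) :
  cond2 a -> has_right_adjoint a.
Proof.
  intros [hjoin hleft].
  set (b := fun u (y : G u) => proj1_sig (constructive_indefinite_description _
              (join_preserving_local_right_adjoint hF hjoin u y))).
  assert (hab : local_adjoint a b).
  { intros u x y. exact (proj2_sig (constructive_indefinite_description _
      (join_preserving_local_right_adjoint hF hjoin u y)) x). }
  exists (Build_morphism X G F b
            (local_right_adjoint_natural hF hG hleft b hab)).
  split.
  - now apply (local_adjoint_order_preserving a).
  - now apply adjoint_iff_local.
Qed.

End FromCond2.
End RightAdjoint.

Theorem proposition3p3 (X : Frame) (F G : posheaf X)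
  (hF : complete F) (hG : complete G)
  (a : morphism F G) (ha : order_preserving a) :
  (sup_preserving a <-> cond2 a) /\ (cond2 a <-> has_right_adjoint a).
Proof.
  split; split.
  - apply sup_preserving_cond2.
  - intro H2. destruct (cond2_right_adjoint a ha hF hG H2) as [b [_ hab]].
    apply (right_adjoint_sup_preserving a b). now apply adjoint_iff_local.
  - exact (cond2_right_adjoint a ha hF hG).
  - intros [b [_ hab]]. apply (right_adjoint_cond2 a b).
    now apply adjoint_iff_local.
Qed.
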